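(* Let $k\ge1$ and $\mathbf m=(m_0,\dots,m_{2k})\in\mathbb Z^{2k+1}$. Then $$P_{2k-1}(x,\mathbf m)=x^{k-1}\sum_{j=0}^{k}\Big(\sum_{A\in I(2k-1,2j-1)}\prod_{i\in A}m_i\Big)x^j$$ and $$P_{2k}(x,\mathbf m)=x^{k}\sum_{j=0}^{k}\Big(\sum_{A\in I(2k,2j)}\prod_{i\in A}m_i\Big)x^j.$$
   Context: For $\mathbf m=(m_0,\dots,m_K)\in\mathbb Z^{K+1}$ the polynomials $P_\ell(x,\mathbf m),Q_\ell(x,\mathbf m)\in\mathbb Z[x]$, $0\le\ell\le K$, are defined by $P_0(x,\mathbf m)=m_0$, $Q_0(x,\mathbf m)=1$ and, for $1\le\ell\le K$, $P_\ell(x,\mathbf m)=m_\ell\,x\,P_{\ell-1}(x,\mathbf m)+Q_{\ell-1}(x,\mathbf m)$, $Q_\ell(x,\mathbf m)=x\,P_{\ell-1}(x,\mathbf m)$. For integers $h\ge0$ and $j\ge-1$, $I(h,j)$ denotes the set of subsets $\{a_0,\dots,a_j\}$ of $\{0,\dots,h\}$ (with $j+1$ elements) such that $a_0<\dots<a_j$ and $a_i\equiv i\pmod 2$ for every $i=0,\dots,j$; in particular $I(h,-1)=\{\emptyset\}$, and the empty product equals $1$. *)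

From mathcomp Require Import all_boot all_order all_algebra.
Set Implicit Arguments. Unset Strict Implicit. Unset Printing Implicit Defensive.
Import GRing.Theory.
Local Open Scope ring_scope.

Fixpoint PQ (m : seq int) (l : nat) : {poly int} * {poly int} :=
  match l with
  | 0%N => ((m`_0)%:P, 1)
  | l'.+1 => let: (p, q) := PQ m l' in
             ((m`_l)%:P * 'X * p + q, 'X * p)
  end.

Definition P (l : nat) (m : seq int) : {poly int} := (PQ m l).1.
Definition Q (l : nat) (m : seq int) : {poly int} := (PQ m l).2.

(* Iset h n = I(h, n-1): the subsets {a_0 < ... < a_(n-1)} of {0,...,h}
   with exactly n elements and a_i = i (mod 2) for every i. *)
Definition Iset (h n : nat) : {set {set 'I_h.+1}} :=
  [set A : {set 'I_h.+1} | (#|A| == n) &&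
     (let s := sort leq [seq val x | x <- enum A] in
      all (fun i => odd (nth 0%N s i) == odd i) (iota 0 n))].

(* Write c(N, n) for the sum of m_(a_0) ... m_(a_(n-1)) over the subsets
   {a_0 < ... < a_(n-1)} of {0, ..., N-1} with a_i = i (mod 2).  Splitting on
   whether N belongs to the subset gives
     c(N+1, n+1) = c(N, n+1) + [N = n mod 2] m_N c(N, n),
   so the polynomials S_N = sum_j c(N, 2j + (N mod 2)) X^j obey the
   continuant-like recurrence S_(N+2) = S_N + m_(N+1) X^((N+1) mod 2) S_(N+1).
   Induction on l then gives P_l = X^(floor(l/2)) S_(l+1) and
   Q_l = X^(ceil(l/2)) S_l; the theorem is the case l = 2k-1, 2k. *)
From mathcomp Require Import all_boot all_order all_algebra zify ring.
Set Implicit Arguments. Unset Strict Implicit. Unset Printing Implicit Defensive.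
Import GRing.Theory.
Local Open Scope ring_scope.

Definition sort_set N (A : {set 'I_N}) : seq nat := sort leq [seq val i | i <- enum A].

Lemma sort_set_sorted N (A : {set 'I_N}) : sorted ltn (sort_set A).
Proof.
rewrite ltn_sorted_uniq_leq sort_uniq sort_sorted ?andbT; last exact: leq_total.
by rewrite map_inj_uniq ?enum_uniq //; apply: val_inj.
Qed.

Lemma sort_set_lt N (A : {set 'I_N}) x : x \in sort_set A -> (x < N)%N.
Proof. by rewrite mem_sort => /mapP [i _ ->]; apply: ltn_ord. Qed.

Lemma ord_max_notin_lift N (B : {set 'I_N}) : ord_max \notin lift ord_max @: B.
Proof. by apply/imsetP => -[i _ /eqP]; rewrite (negbTE (neq_lift _ _)). Qed.

Lemma mem_map_val_lift N (B : {set 'I_N}) :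
  [seq val i | i <- enum (lift ord_max @: B)] =i [seq val i | i <- enum B].
Proof.
move=> x; apply/mapP/mapP => -[i]; rewrite mem_enum.
  by case/imsetP => j jB -> ->; exists j; [rewrite mem_enum | exact: lift_max].
by move=> iB ->; exists (lift ord_max i); [rewrite mem_enum imset_f | exact/esym/lift_max].
Qed.

Lemma sort_set_lift N (B : {set 'I_N}) : sort_set (lift ord_max @: B) = sort_set B.
Proof.
apply: (irr_sorted_eq ltn_trans ltnn); rewrite ?sort_set_sorted // => x.
by rewrite !mem_sort mem_map_val_lift.
Qed.

Lemma sort_set_lift_max N (B : {set 'I_N}) :
  sort_set (ord_max |: lift ord_max @: B) = rcons (sort_set B) N.
Proof.
apply: (irr_sorted_eq ltn_trans ltnn); rewrite ?sort_set_sorted //.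
  have := @sort_set_lt N B; have := sort_set_sorted B.
  case: (sort_set B) => //= x s xs_sorted xs_lt; rewrite rcons_path xs_sorted.
  by apply: xs_lt; rewrite mem_last.
move=> x; rewrite mem_rcons in_cons !mem_sort -(mem_map_val_lift B x).
apply/mapP/orP => [[i]|[/eqP->|/mapP [i iB ->]]].
- rewrite mem_enum in_setU1 => /orP [/eqP-> ->|iB ->]; first by left.
  by right; apply: map_f; rewrite mem_enum.
- by exists ord_max; rewrite ?mem_enum ?setU11.
- by exists i; rewrite // mem_enum setU1r // -mem_enum.
Qed.

Section SumSubsets.

Variable V : nmodType.

Definition sum_subsets N (F : seq nat -> V) := \sum_(A : {set 'I_N}) F (sort_set A).

Lemma sum_subsets0 F : sum_subsets 0 F = F [::].
Proof.
rewrite /sum_subsets (big_pred1 set0) => [|A]; first by rewrite /sort_set enum_set0.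
by apply/esym/eqP/setP => -[].
Qed.

Lemma sum_subsetsS N F :
  sum_subsets N.+1 F = sum_subsets N F + sum_subsets N (fun s => F (rcons s N)).
Proof.
pose lift_set (Bb : {set 'I_N} * bool) :=
  if Bb.2 then ord_max |: lift ord_max @: Bb.1 else lift ord_max @: Bb.1.
pose unlift_set (A : {set 'I_N.+1}) := ([set i | lift ord_max i \in A], ord_max \in A).
have mem_lift (B : {set 'I_N}) (i : 'I_N) : (lift ord_max i \in lift ord_max @: B) = (i \in B).
  exact: mem_imset (@lift_inj _ ord_max).
have lift_eq_max (i : 'I_N) : (lift ord_max i == ord_max) = false.
  by apply/negbTE; rewrite eq_sym neq_lift.
have lift_setK : cancel lift_set unlift_set.
  case=> B b; rewrite /unlift_set /lift_set; congr pair.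
    by apply/setP => i; case: b; rewrite /= inE ?in_setU1 ?lift_eq_max mem_lift.
  by case: b; rewrite /= ?setU11 // (negbTE (ord_max_notin_lift B)).
have unlift_setK : cancel unlift_set lift_set.
  move=> A; apply/setP => x; rewrite /lift_set /unlift_set /=.
  case: (unliftP ord_max x) => [j ->|->].
    by case: ifP; rewrite ?in_setU1 ?lift_eq_max mem_lift inE.
  by case: ifP => Amax; rewrite ?setU11 // (negbTE (ord_max_notin_lift _)).
rewrite /sum_subsets (reindex lift_set) /=; last first.
  by exists unlift_set => ? _; [apply: lift_setK | apply: unlift_setK].
rewrite -(pair_big xpredT xpredT (fun B b => F (sort_set (lift_set (B, b))))) /=.
rewrite addrC -big_split /=; apply: eq_bigr => B _.
by rewrite big_bool /lift_set /= sort_set_lift_max sort_set_lift.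
Qed.

End SumSubsets.

Definition alternating n (s : seq nat) :=
  (size s == n) && all (fun i => odd (nth 0%N s i) == odd i) (iota 0 n).

Lemma alternating_nil n : alternating n [::] = (n == 0%N).
Proof. by case: n. Qed.

Lemma alternating0_rcons s x : alternating 0 (rcons s x) = false.
Proof. by rewrite /alternating size_rcons. Qed.

Lemma alternatingS_rcons n s x :
  alternating n.+1 (rcons s x) = alternating n s && (odd x == odd n).
Proof.
rewrite /alternating size_rcons eqSS -addn1 iotaD all_cat /= andbT add0n.
case: eqP => //= size_s; rewrite nth_rcons size_s ltnn eqxx; congr andb.
by apply: eq_in_all => i; rewrite mem_iota add0n nth_rcons size_s => /andP [_ ->].
Qed.

Section AlternatingSums.

Variables (R : comNzSemiRingType) (m : seq R).

Definition alt_coef N n : R :=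
  sum_subsets N (fun s => if alternating n s then \prod_(i <- s) m`_i else 0).

Lemma alt_coef0n n : alt_coef 0 n = (n == 0%N)%:R.
Proof. by rewrite /alt_coef sum_subsets0 alternating_nil big_nil; case: n. Qed.

Lemma alt_coefn0 N : alt_coef N 0 = 1.
Proof.
elim: N => [|N IH]; first by rewrite alt_coef0n.
rewrite -[RHS]addr0 -IH /alt_coef sum_subsetsS; congr (_ + _).
by apply: big1 => A _; rewrite alternating0_rcons.
Qed.

Lemma alt_coefSS N n : alt_coef N.+1 n.+1 =
  alt_coef N n.+1 + (if odd N == odd n then m`_N * alt_coef N n else 0).
Proof.
rewrite /alt_coef sum_subsetsS; congr (_ + _); rewrite /sum_subsets.
case: ifP => parity_N.
  rewrite mulr_sumr; apply: eq_bigr => A _; rewrite alternatingS_rcons parity_N andbT.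
  by case: ifP; rewrite ?mulr0 // big_rcons mulrC.
by apply: big1 => A _; rewrite alternatingS_rcons parity_N andbF.
Qed.

Lemma alt_coef_eq0 N n : (N < n)%N -> alt_coef N n = 0.
Proof.
elim: N n => [|N IH] [|n] //; first by rewrite alt_coef0n.
by move=> lt_Nn; rewrite alt_coefSS !IH ?mulr0 ?if_same ?addr0 //; apply: ltnW.
Qed.

Lemma sum_Iset h n :
  \sum_(A in Iset h n) \prod_(i in A) m`_(val i) = alt_coef h.+1 n.
Proof.
rewrite /alt_coef /sum_subsets big_mkcond; apply: eq_bigr => A _.
have -> : (A \in Iset h n) = alternating n (sort_set A).
  by rewrite inE /alternating /sort_set size_sort size_map -cardE.
case: ifP => // _.
by rewrite (perm_big [seq val i | i <- enum A]) ?perm_sort // big_map big_enum.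
Qed.

Lemma alt_coef_rec N n : odd n = odd N.+1 ->
  alt_coef N.+2 n.+1 = alt_coef N n.+1 + m`_N.+1 * alt_coef N.+1 n.
Proof.
move=> parity_n; rewrite alt_coefSS (alt_coefSS N) parity_n eqxx /=.
by case: (odd N); rewrite addr0.
Qed.

Definition alt_poly N : {poly R} := \poly_(j < N./2.+1) alt_coef N (2 * j + odd N)%N.

Lemma coef_alt_poly N j : (alt_poly N)`_j = alt_coef N (2 * j + odd N)%N.
Proof.
rewrite coef_poly; case: ltnP => // lt_half_j; rewrite alt_coef_eq0 //.
by have := odd_double_half N; lia.
Qed.

Lemma alt_polyE N :
  alt_poly N = \sum_(j < N./2.+1) (alt_coef N (2 * j + odd N)%N)%:P * 'X^j.
Proof. by rewrite /alt_poly poly_def; apply: eq_bigr => j _; rewrite mul_polyC. Qed.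

Lemma alt_poly0 : alt_poly 0 = 1.
Proof. by apply/polyP => j; rewrite coef_alt_poly coef1 alt_coef0n; case: j. Qed.

Lemma alt_poly1 : alt_poly 1 = (m`_0)%:P.
Proof.
apply/polyP => -[|j]; rewrite coef_alt_poly coefC //=.
  by rewrite alt_coefSS !alt_coef0n add0r mulr1.
by rewrite alt_coef_eq0 // addn1 ltnS muln_gt0.
Qed.

Lemma alt_polySS N :
  alt_poly N.+2 = alt_poly N + (m`_N.+1)%:P * 'X^(odd N.+1) * alt_poly N.+1.
Proof.
apply/polyP => j; rewrite coefD -mulrA coefCM coefXnM !coef_alt_poly /=.
rewrite negbK; have odd_2j i : odd (2 * i) = false by rewrite mul2n odd_double.
case odd_N: (odd N) => /=.
  by rewrite subn0 !addn0 addn1 alt_coef_rec //= odd_N odd_2j.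
case: j => [|j]; first by rewrite !alt_coefn0 mulr0 addr0.
by rewrite subn1 /= !addn0 addn1 mulnS add2n alt_coef_rec //= odd_N odd_2j.
Qed.

End AlternatingSums.

Lemma P_rec l m : P l.+1 m = (m`_l.+1)%:P * 'X * P l m + Q l m.
Proof. by rewrite /P /Q /=; case: (PQ m l). Qed.

Lemma Q_rec l m : Q l.+1 m = 'X * P l m.
Proof. by rewrite /P /Q /=; case: (PQ m l). Qed.

Lemma PQ_alt_poly m l :
  P l m = 'X^(l./2) * alt_poly m l.+1 /\ Q l m = 'X^(uphalf l) * alt_poly m l.
Proof.
elim: l => [|l [P_l Q_l]]; first by rewrite alt_poly0 alt_poly1 !mul1r.
rewrite P_rec Q_rec P_l Q_l alt_polySS /=; split; last by rewrite exprS mulrA.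
by rewrite uphalf_half exprD; case: (odd l); rewrite /= ?expr0 ?expr1; ring.
Qed.

Theorem lemma8 (k : nat) (m : (2 * k).+1.-tuple int) : (1 <= k)%N ->
  P (2 * k).-1 m =
    'X^(k.-1) * \sum_(j < k.+1)
       (\sum_(A in Iset (2 * k).-1 (2 * j)) \prod_(i in A) m`_(val i))%:P
         * 'X^j
  /\
  P (2 * k) m =
    'X^k * \sum_(j < k.+1)
       (\sum_(A in Iset (2 * k) (2 * j).+1) \prod_(i in A) m`_(val i))%:P
         * 'X^j.
Proof.
case: k m => [|k] m // _; move: (tval m) => {}m.
have [P_odd _] := PQ_alt_poly m (k.*2).+1.
have [P_even _] := PQ_alt_poly m (k.*2).+2.
have -> : (2 * k.+1).-1 = (k.*2).+1 by rewrite mul2n doubleS.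
rewrite mul2n doubleS P_odd P_even !alt_polyE /= uphalf_double doubleK odd_double /=.
by split; congr (_ * _); apply: eq_bigr => j _; rewrite sum_Iset ?addn0 ?addn1.
Qed.
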